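(* $\mathfrak{icp}(\mathsf{meager}\setminus\{\emptyset\},\subseteq)=\operatorname{add}(\mathsf{meager})$.
   Context: $\mathsf{meager}$ is the ideal of meager subsets of $2^\omega$, ordered by inclusion. For a poset $(P,\le)$, $F\subseteq P$ is an incomparable family if for every $p\in P$ there is $q\in F$ with $p\not\le q$ and $q\not\le p$; $\mathfrak{icp}(P)$ is the minimal size of an incomparable family. $\operatorname{add}(\mathsf{meager})$ is the minimal size of a family of meager sets whose union is not meager. *)

From mathcomp Require Import all_boot all_order all_algebra.
From mathcomp Require Import all_classical all_reals all_analysis.
Set Implicit Arguments. Unset Strict Implicit. Unset Printing Implicit Defensive.
Local Open Scope classical_set_scope.

Notation Cantor := cantor_space.

Definition nowhere_dense (T : topologicalType) (A : set T) : Prop :=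
  (closure A)° = set0.

Definition meager (T : topologicalType) (A : set T) : Prop :=
  exists N : nat -> set T, (forall n, nowhere_dense (N n)) /\ A `<=` \bigcup_n N n.

Definition meager_ne (A : set Cantor) : Prop := meager A /\ A <> set0.

Definition incomparable_family (T : Type) (P : set T) (le : T -> T -> Prop)
    (F : set T) : Prop :=
  F `<=` P /\ forall p, P p -> exists2 q, F q & ~ le p q /\ ~ le q p.

Definition icp_family (F : set (set Cantor)) : Prop :=
  incomparable_family meager_ne (fun A B => A `<=` B) F.

Definition add_family (F : set (set Cantor)) : Prop :=
  F `<=` (@meager Cantor) /\ ~ meager (\bigcup_(A in F) A).

Definition min_card_family (T : Type) (Q : set T -> Prop) (F : set T) : Prop :=
  Q F /\ forall G, Q G -> (F #<= G)%card.

From mathcomp Require Import all_boot all_order all_algebra.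
From mathcomp Require Import all_classical all_reals all_analysis.
From mathcomp Require Import wochoice.
Set Implicit Arguments. Unset Strict Implicit. Unset Printing Implicit Defensive.
Local Open Scope classical_set_scope.

(* 1. Least cardinalities exist.  In a well-ordered type every subset A is
      equinumerous with an initial segment (the image of the collapse of A,
      defined by well-founded recursion); initial segments are linearly
      ordered by inclusion, so every nonempty collection of subsets has a
      member of least cardinality.  Both invariants are therefore attained.
   2. Baire category: a nonempty compact regular space is not meager, and the
      points of a perfect T1 space are nowhere dense.  In Cantor space this
      makes singletons meager and the whole space non-meager, so the family of
      all singletons witnesses add(meager).
   3. Every incomparable family is an add family: its union is a nonempty
      set, which cannot be meager since it is comparable with every member.
   4. From an add family G one builds an incomparable family of size at most
      |G|: replace one member by a singleton {c} and delete c from the others.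
   The two least sizes are then compared by Cantor-Bernstein. *)

Section WellOrderedMinimum.
Variables (T : choiceType) (R : rel T).
Hypothesis wR : well_order R.

Lemma wo_min (P : set T) : (exists x, P x) ->
  exists z, P z /\ forall x, P x -> R z x.
Proof.
move=> [x Px].
have [|z [[zP zmin] _]] := @wR [pred y | `[< P y >]].
  by exists x; rewrite inE.
exists z; split; first by move: zP; rewrite inE.
by move=> y Py; apply: zmin; rewrite inE.
Qed.

Lemma wo_refl x : R x x.
Proof. by have [z [-> zmin]] := @wo_min [set x] (ex_intro _ x erefl); apply: zmin. Qed.

Lemma wo_total x y : R x y \/ R y x.
Proof.
have [z [[->|->] zmin]] := @wo_min [set z | z = x \/ z = y] (ex_intro _ x (or_introl erefl)).
  by left; apply: zmin; right.
by right; apply: zmin; left.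
Qed.

(* Antisymmetry comes from the uniqueness of minima. *)
Lemma wo_antisym x y : R x y -> R y x -> x = y.
Proof.
move=> Rxy Ryx; pose P := [pred u | (u == x) || (u == y)].
have [|z [_ zuniq]] := @wR P; first by exists x; rewrite inE eqxx.
have hx : minimum_of R P x.
  split; first by rewrite inE eqxx.
  by move=> u; rewrite inE => /orP[/eqP->|/eqP->] //; apply: wo_refl.
have hy : minimum_of R P y.
  split; first by rewrite inE eqxx orbT.
  by move=> u; rewrite inE => /orP[/eqP->|/eqP->] //; apply: wo_refl.
by rewrite -(zuniq _ hx) -(zuniq _ hy).
Qed.

Definition strict x y := R x y /\ x <> y.

Lemma wf_strict : well_founded strict.
Proof.
move=> a; apply: contrapT => na.
have [m [nm mmin]] := @wo_min [set x | ~ Acc strict x] (ex_intro _ a na).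
apply: nm; constructor => y [Rym ym]; apply: contrapT => ny.
by apply: ym; apply: wo_antisym => //; apply: mmin.
Qed.

Section Collapse.
Variable A : set T.

(* collapse a is the R-least element not of the form collapse b, b in A, b < a:
   the Mostowski-style collapse of A onto an initial segment of R. *)
Definition collapse_step (a : T) (rec : forall b, strict b a -> T) : T :=
  xget a [set x | (~ exists b (h : strict b a), A b /\ x = rec b h) /\
    forall y, (~ exists b (h : strict b a), A b /\ y = rec b h) -> R x y].

Definition collapse := Fix wf_strict (fun _ => T) collapse_step.

Definition collapsed_below a x := exists b (h : strict b a), A b /\ x = collapse b.

Lemma collapseE a : collapse a =
  xget a [set x | ~ collapsed_below a x /\ forall y, ~ collapsed_below a y -> R x y].
Proof.
rewrite /collapse Fix_eq // => x f g fg.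
suff -> : f = g by [].
by apply: functional_extensionality_dep => y;
   apply: functional_extensionality_dep => p; apply: fg.
Qed.

Lemma collapse_spec a : R (collapse a) a /\ ~ collapsed_below a (collapse a) /\
  forall y, ~ collapsed_below a y -> R (collapse a) y.
Proof.
elim/(well_founded_ind wf_strict): a => a IH.
have a_free : ~ collapsed_below a a.
  move=> [b [[Rba ba] [Ab ab]]]; have [Rbb _] := IH b (conj Rba ba).
  by apply: ba; apply: wo_antisym => //; rewrite -ab in Rbb.
have least_free : exists x, ~ collapsed_below a x /\ forall y, ~ collapsed_below a y -> R x y.
  by have [z ?] := @wo_min [set x | ~ collapsed_below a x] (ex_intro _ a a_free); exists z.
have := xgetPex a least_free; rewrite -collapseE => -[fresh least].
by split => //; apply: least.
Qed.

Lemma collapse_inj : {in A &, injective collapse}.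
Proof.
move=> a a'; rewrite !in_setE => Aa Aa' e; apply: contrapT => ne.
have [Raa'|Ra'a] := wo_total a a'.
  have [_ [H _]] := collapse_spec a'; apply: H.
  by exists a, (conj Raa' ne); split.
have [_ [H _]] := collapse_spec a; apply: H.
by exists a', (conj Ra'a (fun h => ne (esym h))); split.
Qed.

Lemma collapse_down a y : A a -> strict y (collapse a) ->
  exists b, A b /\ y = collapse b.
Proof.
move=> Aa [Ry ny]; have [_ [_ H]] := collapse_spec a.
have : collapsed_below a y.
  by apply: contrapT => nI; apply: ny; apply: wo_antisym => //; exact: H.
by move=> [b [_ [Ab ->]]]; exists b.
Qed.

End Collapse.

Definition initial_copy (A : set T) := collapse A @` A.

Lemma initial_copy_card A : (initial_copy A #= A)%card.
Proof. exact: inj_card_eq (@collapse_inj A). Qed.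

Lemma initial_copy_down A x y : initial_copy A x -> strict y x -> initial_copy A y.
Proof.
by move=> [a Aa <-] lty; have [b [Ab ->]] := collapse_down Aa lty; exists b.
Qed.

Lemma initial_copy_le F G : initial_copy F `<=` initial_copy G -> (F #<= G)%card.
Proof.
move=> FG; rewrite -(card_le_eql (initial_copy_card F)).
by rewrite -(card_le_eqr (initial_copy_card G)); exact: subset_card_le.
Qed.

(* Every nonempty collection of subsets has a member of least cardinality:
   take the collection member whose initial copy misses the R-least point
   missed by some initial copy (or any member if there is no such point). *)
Lemma min_card_exists (Q : set T -> Prop) : (exists F, Q F) ->
  exists F, min_card_family Q F.
Proof.
move=> [F0 QF0].
have [[x [F [QF nJ]]]|all_in] := pselect (exists x F, Q F /\ ~ initial_copy F x).
  have [m [[F' [QF' nm]] mmin]] := @wo_min [set x | exists F, Q F /\ ~ initial_copy F x]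
     (ex_intro _ x (ex_intro _ F (conj QF nJ))).
  exists F'; split => // G QG; apply: initial_copy_le => y Jy.
  apply: contrapT => nJy; have Rmy : R m y by apply: mmin; exists G.
  by apply: (nm); apply: (initial_copy_down Jy); split => // my; subst y; apply: nm.
exists F0; split => // G QG; apply: initial_copy_le => y _.
by apply: contrapT => nJy; apply: all_in; exists y, G.
Qed.

End WellOrderedMinimum.

Section MeagerSets.
Context {T : topologicalType}.

Lemma meager_sub (A B : set T) : A `<=` B -> meager B -> meager A.
Proof. by move=> AB [N [nN BN]]; exists N; split => //; exact: subset_trans BN. Qed.

Lemma meagerU (A B : set T) : meager A -> meager B -> meager (A `|` B).
Proof.
move=> [N [nN AN]] [M [nM BM]].
exists (fun n => if odd n then M n./2 else N n./2); split.
  by move=> n; case: (odd n).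
move=> x [/AN [k _ Nk]|/BM [k _ Mk]].
  by exists k.*2 => //; rewrite odd_double doubleK.
by exists k.*2.+1 => //=; rewrite odd_double /= uphalf_double.
Qed.

Lemma set1_nowhere_dense : accessible_space T -> perfect_set [set: T] ->
  forall x : T, nowhere_dense [set x].
Proof.
move=> T1 perfT x; have cl : closed [set x] by exact: accessible_closed_set1.
rewrite /nowhere_dense -(proj1 (closure_id _) cl).
apply/seteqP; split => // y /= iy; have yx : y = x := nbhs_singleton iy.
subst y; apply: (proj1 perfectTP perfT x).
by rewrite openE => z /= ->.
Qed.

Hypothesis regT : regular_space T.

Lemma baire_step (N V : set T) : nowhere_dense N -> open V -> V !=set0 ->
  exists W : set T, [/\ open W, W !=set0 & closure W `<=` V `\` closure N].
Proof.
move=> nN oV [v Vv].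
have oD : open (V `\` closure N).
  by apply: openI => //; apply: closed_openC; exact: closed_closure.
have [a [Va nNa]] : (V `\` closure N) !=set0.
  apply: contrapT => ne.
  have sub : V `<=` closure N.
    by move=> y Vy; apply: contrapT => ny; apply: ne; exists y.
  have : (closure N)° v.
    by have := oV; rewrite openE => /(_ v Vv); exact: interiorS.
  by rewrite nN.
have nb : nbhs a (V `\` closure N) by move: oD; rewrite openE => /(_ a (conj Va nNa)).
have [W' nW' cW'] := regT nb.
exists W'°; split; [exact: open_interior | by exists a |].
by apply: subset_trans cW'; apply: closureS; exact: interior_subset.
Qed.

Lemma nested_avoiding_opens (N : nat -> set T) : (forall n, nowhere_dense (N n)) ->
  [set: T] !=set0 -> exists V : nat -> set T,
    (forall n, open (V n) /\ V n !=set0) /\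
    (forall n, closure (V n.+1) `<=` V n `\` closure (N n)).
Proof.
move=> nN T0.
have step (p : nat * set T) : exists W : set T, (open p.2 /\ p.2 !=set0) ->
    [/\ open W, W !=set0 & closure W `<=` p.2 `\` closure (N p.1)].
  case: p => n V; have [[oV nV]|nc] := pselect (open V /\ V !=set0).
    by have [W HW] := baire_step (nN n) oV nV; exists W.
  by exists set0 => h; exfalso; apply: nc.
have [g hg] := choice step.
pose fix V n := if n is k.+1 then g (k, V k) else setT.
have HV n : open (V n) /\ V n !=set0.
  elim: n => [|n [oV nV]]; first by split; [exact: openT|exact: T0].
  by have [? ? _] := hg (n, V n) (conj oV nV).
by exists V; split => // n; have [_ _] := hg (n, V n) (HV n).
Qed.

End MeagerSets.

(* Baire category theorem for compact regular spaces: the closures of a nested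
   sequence of opens avoiding each N n have the finite intersection property,
   hence a common point, which lies in no N n. *)
Lemma compact_not_meager (T : ptopologicalType) :
  regular_space T -> compact [set: T] -> ~ meager [set: T].
Proof.
move=> regT cptT [N [nN TN]].
have [V [V_open V_avoid]] := nested_avoiding_opens regT nN (ex_intro _ point I).
have mono n m : (n <= m)%N -> V m `<=` V n.
  move=> /subnK <-; elim: (m - n)%N => [|k IH] // y Vy; apply: IH.
  by rewrite addSn in Vy; have [] := V_avoid _ y (subset_closure Vy).
move: cptT; rewrite compact_In0 => /(_ nat setT (fun n => closure (V n))); case.
- exists (fun n => closure (V n)) => [n _|n _]; first exact: closed_closure.
  by rewrite setTI.
- move=> D _; have [y Vy] := (V_open (\max_(i <- finmap.enum_fset D) i)).2.
  exists y => i /= iD; apply: subset_closure.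
  exact: (mono i _ (leq_bigmax_seq _ iD isT)).
- move=> x Hx; have [n _ Nn] := TN x I.
  by have [_] := V_avoid n x (Hx n.+1 I); apply; apply: subset_closure.
Qed.

(* Cantor space is a perfect compact Hausdorff uniform space. *)
Lemma cantor_meager_set1 (x : Cantor) : meager [set x].
Proof.
exists (fun _ => [set x]); split => [_|y ->]; last by exists 0%N.
exact: set1_nowhere_dense (hausdorff_accessible cantor_space_hausdorff) cantor_perfect x.
Qed.

Lemma cantor_not_meager : ~ meager [set: Cantor].
Proof. exact: compact_not_meager uniform_regular cantor_space_compact. Qed.

Lemma set1_neq0 (T : Type) (x : T) : [set x] <> set0.
Proof. by move=> e; have : [set x] x by []; rewrite e. Qed.

Lemma add_family_exists : exists G, add_family G.
Proof.
exists [set [set x] | x in [set: Cantor]]; split.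
  by move=> q [x _ <-]; exact: cantor_meager_set1.
move=> m; apply: cantor_not_meager; apply: meager_sub m => x _.
by exists [set x] => //; exists x.
Qed.

(* An incomparable family has a nonempty union comparable with each member,
   so this union cannot be meager. *)
Lemma icp_add (F : set (set Cantor)) : icp_family F -> add_family F.
Proof.
move=> [FP Finc]; split; first by move=> q /FP [].
move=> mU; have [q Fq _] := Finc _ (conj (cantor_meager_set1 point) (@set1_neq0 _ point)).
have Une : \bigcup_(A in F) A <> set0.
  move=> e; apply: (proj2 (FP q Fq)); apply/seteqP; split => // y qy.
  have : (\bigcup_(A in F) A) y by exists q.
  by rewrite e.
have [q' Fq' [_ nq]] := Finc _ (conj mU Une).
by apply: nq => y qy; exists q'.
Qed.

Section IncomparableFromAdd.
Variable G : set (set Cantor).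
Hypothesis G_meager : G `<=` @meager Cantor.
Hypothesis union_not_meager : ~ meager (\bigcup_(A in G) A).
Variable A1 : set Cantor.
Hypothesis GA1 : G A1.

Definition relocate (A : set Cantor) : set Cantor :=
  if `[< A = A1 >] then [set point] else A `\` [set point].

Definition relocated_family : set (set Cantor) :=
  [set q | exists2 A, G A & q = relocate A /\ q <> set0].

Lemma relocated_card : (relocated_family #<= G)%card.
Proof.
apply: (@card_le_trans _ _ _ (relocate @` G)); last exact: card_image_le.
by apply: subset_card_le => q [A GA [-> _]]; exists A.
Qed.

Lemma relocated_meager_ne : relocated_family `<=` meager_ne.
Proof.
move=> q [A GA [-> ne]]; split => //.
rewrite /relocate; case: asboolP => _; first exact: cantor_meager_set1.
by apply: meager_sub (G_meager GA) => x [].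
Qed.

Lemma escaping_member (p : set Cantor) : meager p ->
  exists A, [/\ G A, A <> A1 & exists x, [/\ A x, x <> point & ~ p x]].
Proof.
move=> mp; apply: contrapT => nex; apply: union_not_meager.
apply: (@meager_sub _ _ ((p `|` A1) `|` [set point])).
  move=> x [A GA Ax].
  have [eA|AA1] := pselect (A = A1); first by subst A; left; right.
  have [ex|xc] := pselect (x = point); first by subst x; right.
  by left; left; apply: contrapT => npx; apply: nex; exists A; split => //; exists x.
apply: meagerU; last exact: cantor_meager_set1.
by apply: meagerU => //; exact: G_meager.
Qed.

(* A nonempty meager p avoiding point is incomparable with {point}; if p
   contains point, an escaping member minus point is incomparable with p. *)
Lemma relocated_incomparable (p : set Cantor) : meager_ne p ->
  exists2 q, relocated_family q & ~ p `<=` q /\ ~ q `<=` p.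
Proof.
move=> [mp pne]; have [pc|npc] := pselect (p point).
  have [A [GA AA1 [x [Ax xc npx]]]] := escaping_member mp.
  have fA : relocate A = A `\` [set point] by rewrite /relocate; case: asboolP.
  exists (A `\` [set point]).
    exists A => //; split; first by rewrite fA.
    move=> e; have : (A `\` [set point]) x by [].
    by rewrite e.
  by split => [/(_ _ pc) [_ /(_ erefl)] | /(_ x (conj Ax xc)) /npx].
exists [set point].
  by exists A1 => //; split; [rewrite /relocate; case: asboolP | exact: set1_neq0].
split => [pc'|/(_ point erefl)] //; apply: pne; apply/seteqP; split => // y py.
by have := pc' y py => /= yc; subst y.
Qed.

End IncomparableFromAdd.

Lemma add_icp (G : set (set Cantor)) : add_family G ->
  exists F, icp_family F /\ (F #<= G)%card.
Proof.
move=> [GM nU].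
have [A1 GA1] : exists A, G A.
  apply: contrapT => nG; apply: nU; apply: meager_sub (cantor_meager_set1 point).
  by move=> x [A GA _]; case: nG; exists A.
exists (relocated_family G A1); split; last exact: relocated_card.
split; first exact: (@relocated_meager_ne G GM A1).
by move=> p; exact: (@relocated_incomparable G GM nU A1 GA1 p).
Qed.

Theorem mainTheorem15 :
  exists (F G : set (set cantor_space)),
    min_card_family icp_family F /\ min_card_family add_family G /\ (F #= G)%card.
Proof.
have [R wR] := well_ordering_principle (set Cantor).
have [G0 addG0] := add_family_exists.
have [F0 [icpF0 _]] := add_icp addG0.
have [F [icpF minF]] := min_card_exists wR (ex_intro _ F0 icpF0).
have [G [addG minG]] := min_card_exists wR (ex_intro _ G0 addG0).
exists F, G; split; first by split.
split; first by split.
apply: Cantor_Bernstein; last exact/minG/icp_add.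
have [F' [icpF' F'G]] := add_icp addG.
exact: card_le_trans (minF _ icpF') F'G.
Qed.
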